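(* For every $U>0$, $\mu\in\mathbb{R}$, $T\ge0$, the functional $\mathcal{F}$ is bounded from below on $\mathcal{D}$.
   Context: Let $\mathbb{T}^3=[-\pi,\pi]^3$ with periodic identification and normalized Haar measure $dp$. Let $\varepsilon(p)=4\sum_{k=1}^3\sin^2(p_k/2)$. $\mathcal{D}=\{(\gamma,\alpha,\rho_0): \gamma\in L^1(\mathbb{T}^3),\ \gamma\ge0,\ \alpha^2\le\gamma(1+\gamma)\text{ a.e.},\ \rho_0\ge0\}$. With $\beta=\sqrt{(\tfrac12+\gamma)^2-\alpha^2}$, $S(\gamma,\alpha)=\int\big[(\beta+\tfrac12)\ln(\beta+\tfrac12)-(\beta-\tfrac12)\ln(\beta-\tfrac12)\big]dp$, and $\mathcal{F}(\gamma,\alpha,\rho_0)=\int(\varepsilon-\mu)\gamma\,dp-\mu\rho_0-TS(\gamma,\alpha)+\frac U2(\int\alpha)^2+U(\int\gamma)^2+U\rho_0\int\alpha+2U\rho_0\int\gamma+\frac U2\rho_0^2$ (integrals over $\mathbb{T}^3$). *)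

From HB Require Import structures.
From mathcomp Require Import all_boot all_order all_algebra.
From mathcomp Require Import all_classical all_reals all_analysis.
Unset Printing Implicit Defensive.
Import Order.TTheory GRing.Theory Num.Theory.
Import numFieldNormedType.Exports.
Local Open Scope classical_set_scope.
Local Open Scope ring_scope.

(* Points of the 3-torus are represented in the fundamental cube
   [-pi,pi]^3 inside R * R * R (= (R * R) * R). *)
Definition pt3 (R : realType) :=
  ((measurableTypeR R * measurableTypeR R) * measurableTypeR R)%type.

Definition leb3 (R : realType) :=
  (((@lebesgue_measure R) \x (@lebesgue_measure R)) \x (@lebesgue_measure R))%E.

Definition cube3 (R : realType) : set (pt3 R) :=
  [set p | (p.1.1 \in `[- pi, pi]) && (p.1.2 \in `[- pi, pi]) && (p.2 \in `[- pi, pi])].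

(* Integral against normalized Haar measure dp = dx / (2 pi)^3 on T^3. *)
Definition tint (R : realType) (f : pt3 R -> R) : R :=
  (2 * pi) ^- 3 * Rintegral (leb3 R) (cube3 R) f.

Definition disp (R : realType) (p : pt3 R) : R :=
  4 * (sin (p.1.1 / 2) ^+ 2 + sin (p.1.2 / 2) ^+ 2 + sin (p.2 / 2) ^+ 2).

Definition xlnx (R : realType) (x : R) : R := if x == 0 then 0 else x * ln x.

Definition betaf (R : realType) (g a : R) : R :=
  Num.sqrt ((2^-1 + g) ^+ 2 - a ^+ 2).

Definition sdens (R : realType) (b : R) : R :=
  xlnx R (b + 2^-1) - xlnx R (b - 2^-1).

Definition entropy (R : realType) (g a : pt3 R -> R) : R :=
  tint R (fun p => sdens R (betaf R (g p) (a p))).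

Definition inD (R : realType) (g a : pt3 R -> R) (rho0 : R) : Prop :=
  [/\ (leb3 R).-integrable (cube3 R) (fun p => (g p)%:E),
      measurable_fun (cube3 R) a,
      {ae leb3 R, forall p, cube3 R p -> 0 <= g p},
      {ae leb3 R, forall p, cube3 R p -> a p ^+ 2 <= g p * (1 + g p)}
    & 0 <= rho0].

Definition Ffun (R : realType) (U mu T : R) (g a : pt3 R -> R) (rho0 : R) : R :=
  tint R (fun p => (disp R p - mu) * g p) - mu * rho0 - T * entropy R g a
  + U / 2 * (tint R a) ^+ 2 + U * (tint R g) ^+ 2 + U * rho0 * tint R a
  + 2 * U * rho0 * tint R g + U / 2 * rho0 ^+ 2.

From HB Require Import structures.
From mathcomp Require Import all_boot all_order all_algebra.
From mathcomp Require Import all_classical all_reals all_analysis.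
From mathcomp Require Import ring lra measurable_realfun.
Import Order.TTheory GRing.Theory Num.Theory.
Local Open Scope classical_set_scope.
Local Open Scope ring_scope.

(** Pointwise, [alpha^2 <= gamma (1 + gamma)] forces [|alpha| <= gamma + 1]
   and [1/2 <= beta <= 1/2 + gamma]; writing [y = beta - 1/2], the entropy
   density [(1 + y) ln (1 + y) - y ln y = ln (1 + y) + y ln (1 + 1/y)] lies in
   [[0, 1 + y]].  Hence, with [x = int gamma >= 0], the entropy and
   [|int alpha|] are at most [x + 1], and [eps >= 0] bounds the kinetic term
   by [- mu x].  Up to the constant [- T], what remains is
   [U x^2 - (mu + T) x] plus [U/2 rho0^2 - (mu + U) rho0] plus the
   nonnegative [U rho0 x] and [U/2 (int alpha)^2]; complete the squares. *)

Section ae_Rintegral.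
Context d (T : measurableType d) (R : realType).
Variable mu : {measure set T -> \bar R}.
Variables (D : set T) (mD : measurable D).

Lemma ae_le_integrable (f g : T -> R) : measurable_fun D f ->
  mu.-integrable D (EFin \o g) -> {ae mu, forall x, D x -> `|f x| <= g x} ->
  mu.-integrable D (EFin \o f).
Proof.
move=> mf ig [N [mN N0 fgN]].
apply/(negligible_integrable mN mD _ N0); first exact/measurable_EFinP.
have mDN : measurable (D `\` N) by exact: measurableD.
apply: (le_integrable mDN _ _ (integrableS mD mDN (@subDsetl _ _ _) ig)).
  exact/measurable_EFinP/(measurable_funS mD (@subDsetl _ _ _) mf).
move=> x [Dx Nx]; rewrite /= lee_fin.
apply: le_trans (ler_norm _); apply: contrapT => /negP fg.
by apply: Nx; apply: fgN => /(_ Dx); rewrite (negPf fg).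
Qed.

Lemma ae_le_Rintegral (f1 f2 : T -> R) :
  mu.-integrable D (EFin \o f1) -> mu.-integrable D (EFin \o f2) ->
  {ae mu, forall x, D x -> f1 x <= f2 x} ->
  \int[mu]_(x in D) f1 x <= \int[mu]_(x in D) f2 x.
Proof.
move=> i1 i2 [N [mN N0 fN]].
rewrite /Rintegral (negligible_integral mN mD i1 N0).
rewrite (negligible_integral mN mD i2 N0).
have mDN : measurable (D `\` N) by exact: measurableD.
apply: le_Rintegral => //; [exact: integrableS i1 | exact: integrableS i2 |].
move=> x [Dx Nx]; apply: contrapT => /negP f12.
by apply: Nx; apply: fN => /(_ Dx); rewrite (negPf f12).
Qed.

End ae_Rintegral.
Arguments ae_le_integrable {d T R mu D} mD {f g}.
Arguments ae_le_Rintegral {d T R mu D} mD {f1 f2}.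

Section pointwise_bounds.
Variable R : realType.

Lemma xlnxE (x : R) : xlnx R x = x * ln x.
Proof. by rewrite /xlnx; case: eqP => [->|]; rewrite ?mul0r. Qed.

Lemma betaf_bounds (x a : R) : 0 <= x -> a ^+ 2 <= x * (1 + x) ->
  2^-1 <= betaf R x a <= 2^-1 + x.
Proof.
move=> x0 ax; rewrite /betaf; set q := _ - _.
have q14 : 2^-1 * 2^-1 <= q by rewrite /q; nra.
have q0 : 0 <= q by apply: le_trans q14; rewrite mulr_ge0 // invr_ge0.
have bb : Num.sqrt q * Num.sqrt q = q by rewrite -expr2 sqr_sqrtr.
have b0 := sqrtr_ge0 q.
apply/andP; split; rewrite /q in bb q14 *; nra.
Qed.

Lemma xlnx1D_sub_bounds (y : R) : 0 <= y ->
  0 <= xlnx R (1 + y) - xlnx R y <= 1 + y.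
Proof.
rewrite le0r => /predU1P[->|yp].
  by rewrite addr0 !xlnxE ln1 mulr0 mul0r subr0 lexx ler01.
rewrite !xlnxE.
have lnE : ln (1 + y) = ln y + ln (1 + y^-1).
  rewrite -lnM ?posrE ?ltr_wpDr ?invr_ge0 ?ltW //.
  by rewrite mulrDr mulr1 divff ?gt_eqF // addrC.
have -> : (1 + y) * ln (1 + y) - y * ln y = ln (1 + y) + y * ln (1 + y^-1).
  by rewrite lnE; ring.
have ln0 : 0 <= ln (1 + y) by apply: ln_ge0; rewrite lerDl ltW.
have lny : ln (1 + y) <= y by apply: le_ln1Dx; lra.
have L0 : 0 <= y * ln (1 + y^-1).
  by apply: mulr_ge0; [exact: ltW | apply: ln_ge0; rewrite lerDl invr_ge0 ltW].
have L1 : y * ln (1 + y^-1) <= 1.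
  rewrite -[X in _ <= X](divff (lt0r_neq0 yp)).
  apply: ler_wpM2l; first exact: ltW.
  by apply: le_ln1Dx; apply: (lt_trans (ltrN10 R)); rewrite invr_gt0.
apply/andP; split; lra.
Qed.

Lemma sdens_bounds (b : R) : 2^-1 <= b -> 0 <= sdens R b <= b + 2^-1.
Proof.
move=> b12; rewrite /sdens; have -> : b + 2^-1 = 1 + (b - 2^-1) by lra.
by apply: xlnx1D_sub_bounds; lra.
Qed.

Lemma sdens_betaf_bounds (x a : R) : 0 <= x -> a ^+ 2 <= x * (1 + x) ->
  0 <= sdens R (betaf R x a) <= x + 1.
Proof.
move=> x0 ax; have /andP[b1 b2] := betaf_bounds _ _ x0 ax.
have /andP[s0 s1] := sdens_bounds _ b1.
by rewrite s0 /= (le_trans s1) //; lra.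
Qed.

Lemma sqr_sin_le1 (x : R) : sin x ^+ 2 <= 1.
Proof. by rewrite sin2cos2 lerBlDr lerDl sqr_ge0. Qed.

Lemma disp_bounds (p : pt3 R) : 0 <= disp R p <= 12.
Proof.
rewrite /disp; have := sqr_sin_le1 (p.1.1 / 2); have := sqr_sin_le1 (p.1.2 / 2).
have := sqr_sin_le1 (p.2 / 2); have := sqr_ge0 (sin (p.1.1 / 2)).
have := sqr_ge0 (sin (p.1.2 / 2)); have := sqr_ge0 (sin (p.2 / 2)).
move=> *; apply/andP; split; lra.
Qed.

End pointwise_bounds.

Section scalar_bounds.
Variable R : realFieldType.

Lemma normr_le_of_sqr_le (x a : R) : 0 <= x -> a ^+ 2 <= x * (1 + x) ->
  `|a| <= x + 1.
Proof.
move=> x0 ax; have [a0|a0] := lerP 0 a.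
  by rewrite ger0_norm //; nra.
by rewrite ltr0_norm //; nra.
Qed.

Lemma quadratic_ge (U m x : R) : 0 < U ->
  - (m ^+ 2 / (4 * U)) <= U * x ^+ 2 - m * x.
Proof.
move=> U0; rewrite -subr_ge0 opprK.
have -> : U * x ^+ 2 - m * x + m ^+ 2 / (4 * U) = U * (x - m / (2 * U)) ^+ 2.
  by field; rewrite gt_eqF.
by rewrite mulr_ge0 ?sqr_ge0 ?ltW.
Qed.

(* [Ffun] with its integrals replaced by reals: [A] the kinetic term, [s] the
   entropy, [x], [b] and [k] the integrals of gamma, alpha and 1. *)
Lemma energy_ge (U mu T k x b s A rho : R) : 0 < U -> 0 <= T -> 0 <= x ->
  0 <= rho -> `|b| <= x + k -> s <= x + k -> - mu * x <= A ->
  - ((mu + T) ^+ 2 / (4 * U)) - ((mu + U * k) ^+ 2 / (4 * (U / 2))) - T * k <=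
  A - mu * rho - T * s + U / 2 * b ^+ 2 + U * x ^+ 2 + U * rho * b
    + 2 * U * rho * x + U / 2 * rho ^+ 2.
Proof.
move=> U0 T0 x0 rho0 bx sx Ax.
have qx := quadratic_ge _ (mu + T) x U0.
have qrho : - ((mu + U * k) ^+ 2 / (4 * (U / 2))) <=
    U / 2 * rho ^+ 2 - (mu + U * k) * rho by apply: quadratic_ge; lra.
have Ts : T * s <= T * (x + k) by exact: ler_wpM2l.
have b2 : 0 <= U / 2 * b ^+ 2 by rewrite mulr_ge0 ?sqr_ge0 // divr_ge0 // ltW.
have Urho : - (U * rho * (x + k)) <= U * rho * b.
  rewrite -mulrN; apply: ler_wpM2l; first by rewrite mulr_ge0 // ltW.
  by move/ler_normlP: bx => [] /=; lra.
have Urhox : 0 <= U * rho * x by rewrite !mulr_ge0 // ltW.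
nra.
Qed.

End scalar_bounds.

Section measurability.
Context d (T : measurableType d) (R : realType) (D : set T).

Lemma measurable_xlnx : measurable_fun setT (xlnx R).
Proof.
rewrite (_ : xlnx R = fun x => x * ln x); first exact: measurable_funM.
by apply/funext => x; rewrite xlnxE.
Qed.

Lemma measurable_sdens_betaf (g a : T -> R) :
  measurable_fun D g -> measurable_fun D a ->
  measurable_fun D (fun p => sdens R (betaf R (g p) (a p))).
Proof.
move=> mg ma.
have mb : measurable_fun D (fun p => betaf R (g p) (a p)).
  apply: (measurableT_comp (continuous_measurable_fun (@sqrt_continuous R))).
  apply: measurable_funB; apply: measurable_funX => //.
  exact: measurable_funD.
by apply: measurable_funB; apply: (measurableT_comp measurable_xlnx);
  [exact: measurable_funD | exact: measurable_funB].
Qed.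

End measurability.
Arguments measurable_sdens_betaf {d T R D g a}.

Section torus_integral.
Variable R : realType.
Local Notation D := (cube3 R).
Local Notation mu := (leb3 R).
Let I : set (measurableTypeR R) := `[- pi, pi]%classic.

Lemma cube3E : D = (I `*` I) `*` I.
Proof.
apply/seteqP; split => [[[x y] z]|[[x y] z]]; rewrite /cube3 /I /=.
  by move=> /andP[/andP[h1 h2] h3]; rewrite /= !inE.
by move=> [[/= h1 h2] h3]; apply/andP; split; [apply/andP; split|]; assumption.
Qed.

Lemma measurable_cube3 : measurable D.
Proof.
by rewrite cube3E; apply: measurableX; [apply: measurableX|];
  exact: measurable_itv.
Qed.

Lemma leb3_cube3_lty : (mu D < +oo)%E.
Proof.
have mI : measurable I by exact: measurable_itv.
rewrite cube3E /leb3 (product_measure1E _ _ (measurableX mI mI) mI).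
rewrite [X in (X * _)%E](_ : _ = lebesgue_measure I * lebesgue_measure I)%E;
  last exact: product_measure1E.
rewrite /I !lebesgue_measure_itv /= lebesgue_measure_itv /=.
by case: ifP => _; rewrite ?mul0e ?mule0 -?EFinD -?EFinM ?ltey.
Qed.

Lemma integrable_cube3_cst (k : R) : mu.-integrable D (EFin \o (fun=> k)).
Proof.
apply/integrableP; split; first exact: measurable_cst.
rewrite (eq_integral (cst `|k|%:E)) //.
rewrite integral_cst; last exact: measurable_cube3.
by apply: lte_mul_pinfty => //; exact: leb3_cube3_lty.
Qed.

Lemma measurable_disp : measurable_fun D (disp R).
Proof.
have msin : measurable_fun setT (fun x : measurableTypeR R => sin (x / 2)).
  apply: measurableT_comp; last exact: measurable_funM.
  exact: continuous_measurable_fun (@continuous_sin R).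
apply: (measurable_funS (E := setT)) => //; apply: measurable_funM => //.
by repeat apply: measurable_funD; apply: measurable_funX;
  apply: (measurableT_comp msin) => //; repeat apply: measurableT_comp.
Qed.

Let tint_weight_ge0 : 0 <= (2 * pi) ^- 3 :> R.
Proof. by rewrite invr_ge0 exprn_ge0 // mulr_ge0 // pi_ge0. Qed.

Lemma le_tint (f1 f2 : pt3 R -> R) :
  mu.-integrable D (EFin \o f1) -> mu.-integrable D (EFin \o f2) ->
  {ae mu, forall p, D p -> f1 p <= f2 p} -> tint R f1 <= tint R f2.
Proof.
move=> i1 i2 f12; apply: ler_wpM2l => //.
by apply: ae_le_Rintegral => //; exact: measurable_cube3.
Qed.

Lemma tintD (f1 f2 : pt3 R -> R) :
  mu.-integrable D (EFin \o f1) -> mu.-integrable D (EFin \o f2) ->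
  tint R (fun p => f1 p + f2 p) = tint R f1 + tint R f2.
Proof.
by move=> i1 i2; rewrite /tint RintegralD ?mulrDr //; exact: measurable_cube3.
Qed.

Lemma tintZl (k : R) (f : pt3 R -> R) : mu.-integrable D (EFin \o f) ->
  tint R (fun p => k * f p) = k * tint R f.
Proof.
move=> fi; rewrite /tint RintegralZl //; first exact: mulrCA.
exact: measurable_cube3.
Qed.

Lemma le_normr_tint (f : pt3 R -> R) : mu.-integrable D (EFin \o f) ->
  `|tint R f| <= tint R (fun p => `|f p|).
Proof.
move=> fi; rewrite /tint normrM ger0_norm //; apply: ler_wpM2l => //.
by apply: le_normr_Rintegral => //; exact: measurable_cube3.
Qed.

End torus_integral.
Arguments le_tint {R f1 f2}.
Arguments tintD {R f1 f2}.
Arguments le_normr_tint {R f}.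

Section domain_bounds.
Variables (R : realType) (g a : pt3 R -> R).
Local Notation D := (cube3 R).
Local Notation mu := (leb3 R).
Hypothesis gi : mu.-integrable D (EFin \o g).
Hypothesis ma : measurable_fun D a.
Hypothesis g_ge0 : {ae mu, forall p, D p -> 0 <= g p}.
Hypothesis a_sqr_le : {ae mu, forall p, D p -> a p ^+ 2 <= g p * (1 + g p)}.

Let mD : measurable D := measurable_cube3 R.

Let mg : measurable_fun D g.
Proof. by apply/measurable_EFinP; exact: measurable_int gi. Qed.

Let g1i : mu.-integrable D (EFin \o (fun p => g p + 1)).
Proof.
have := integrableD mD gi (integrable_cube3_cst R 1).
by apply: (eq_integrable mD) => p _; rewrite /= EFinD.
Qed.

Let tint_g1 : tint R (fun p => g p + 1) = tint R g + tint R (fun=> 1).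
Proof. exact: tintD gi (integrable_cube3_cst R 1). Qed.

Let ae_domain :
  {ae mu, forall p, D p -> 0 <= g p /\ a p ^+ 2 <= g p * (1 + g p)}.
Proof.
by apply: filterS2 g_ge0 a_sqr_le => p g0 ag Dp; split; [exact: g0 | exact: ag].
Qed.

Lemma tint_ge0 : 0 <= tint R g.
Proof.
have := le_tint (integrable_cube3_cst R 0) gi g_ge0.
by rewrite /tint Rintegral_cst // mul0r mulr0.
Qed.

Lemma entropy_le : entropy R g a <= tint R g + tint R (fun=> 1).
Proof.
have bounds :
    {ae mu, forall p, D p -> 0 <= sdens R (betaf R (g p) (a p)) <= g p + 1}.
  by apply: filterS ae_domain => p h /h[g0 ag]; exact: sdens_betaf_bounds.
have si : mu.-integrable D (EFin \o (fun p => sdens R (betaf R (g p) (a p)))).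
  apply: (ae_le_integrable mD (measurable_sdens_betaf mg ma) g1i).
  by apply: filterS bounds => p h /h /andP[s0 s1]; rewrite ger0_norm.
rewrite /entropy -tint_g1; apply: le_tint si g1i _.
by apply: filterS bounds => p h /h /andP[].
Qed.

Lemma normr_tint_le : `|tint R a| <= tint R g + tint R (fun=> 1).
Proof.
have bound : {ae mu, forall p, D p -> `|a p| <= g p + 1}.
  by apply: filterS ae_domain => p h /h[g0 ag]; exact: normr_le_of_sqr_le.
have ai : mu.-integrable D (EFin \o a).
  by apply: (ae_le_integrable mD ma g1i); exact: bound.
have nai : mu.-integrable D (EFin \o (fun p => `|a p|)).
  apply: (ae_le_integrable mD _ g1i); first exact: measurableT_comp ma.
  by apply: filterS bound => p h /h; rewrite normr_id.
by rewrite -tint_g1; apply: le_trans (le_normr_tint ai) (le_tint nai g1i bound).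
Qed.

Lemma tint_kinetic_ge (m : R) :
  - m * tint R g <= tint R (fun p => (disp R p - m) * g p).
Proof.
have mgi : mu.-integrable D (EFin \o (fun p => - m * g p)).
  have := integrableZl mD (- m) gi.
  by apply: (eq_integrable mD) => p _; rewrite /= EFinM.
have Cgi : mu.-integrable D (EFin \o (fun p => (12 + `|m|) * `|g p|)).
  have := integrableZl mD (12 + `|m|) (integrable_abse gi).
  by apply: (eq_integrable mD) => p _; rewrite /= EFinM.
have ki : mu.-integrable D (EFin \o (fun p => (disp R p - m) * g p)).
  apply: (ae_le_integrable mD _ Cgi).
    apply: measurable_funM mg; apply: measurable_funB => //.
    exact: measurable_disp.
  apply: aeW => p _; rewrite normrM; apply: ler_wpM2r => //.
  have /andP[d0 d12] := disp_bounds _ p.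
  by apply: le_trans (ler_normB _ _) _; rewrite ger0_norm // lerD2r.
rewrite -tintZl //; apply: le_tint mgi ki _.
apply: filterS g_ge0 => p h /h g0; have /andP[d0 _] := disp_bounds _ p.
by apply: ler_wpM2r => //; lra.
Qed.

End domain_bounds.

Theorem proposition3p1 (R : realType) (U mu T : R) (hU : 0 < U) (hT : 0 <= T) :
  exists C : R, forall (g a : pt3 R -> R) (rho0 : R),
    inD R g a rho0 -> C <= Ffun R U mu T g a rho0.
Proof.
pose k := tint R (fun=> 1).
exists (- ((mu + T) ^+ 2 / (4 * U)) - ((mu + U * k) ^+ 2 / (4 * (U / 2)))
  - T * k).
move=> g a rho0 [gi ma g_ge0 a_sqr_le rho0_ge0].
apply: energy_ge => //.
- exact: tint_ge0.
- exact: normr_tint_le.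
- exact: entropy_le.
- exact: tint_kinetic_ge.
Qed.
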